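(* Let ${\bm G}$ be a random matrix in $\mathbb{R}^{m\times n}$ with $\mathbb{E}[{\bm G}]={\bm M}$ and $\mathbb{E}[\|{\bm G}-{\bm M}\|_F^\alpha]\le\sigma^\alpha$ for some $\alpha\in(1,2]$ and $\sigma>0$, and let $\tau>0$, $d=\min\{m,n\}$. Then $$\mathbb{E}\big[\|\mathcal{C}_\tau({\bm G})\|_F^2\big]\le 2\|{\bm M}\|_F^2+2^{4-\alpha}d^{1-\alpha/2}\tau^{2-\alpha}\sigma^\alpha.$$ (In the paper this is applied conditionally on ${\bm X}_k$ with ${\bm G}={\bm G}_k$ and ${\bm M}=\nabla f({\bm X}_k)$.)
   Context: $\|\cdot\|_F$ is the Frobenius norm. Spectral clipping: for ${\bm G}\in\mathbb{R}^{m\times n}$ with (thin) SVD ${\bm G}={\bm U}\,\mathrm{diag}(\sigma_1,\dots,\sigma_d){\bm V}^\top$, $d=\min\{m,n\}$, and threshold $\tau>0$, define $\mathcal{C}_\tau({\bm G}):={\bm U}\,\mathrm{diag}(\min\{\sigma_1,\tau\},\dots,\min\{\sigma_d,\tau\}){\bm V}^\top$. *)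

From HB Require Import structures.
From mathcomp Require Import all_boot all_order all_algebra.
From mathcomp Require Import all_classical all_reals all_analysis.
Set Implicit Arguments. Unset Strict Implicit. Unset Printing Implicit Defensive.
Import Order.TTheory GRing.Theory Num.Theory.
Local Open Scope ring_scope.

Definition frob (R : realType) (m n : nat) (A : 'M[R]_(m, n)) : R :=
  Num.sqrt (\sum_(i < m) \sum_(j < n) A i j ^+ 2).

Definition is_thin_svd (R : realType) (m n : nat) (G : 'M[R]_(m, n))
  (U : 'M[R]_(m, minn m n)) (s : 'rV[R]_(minn m n)) (V : 'M[R]_(n, minn m n)) :=
  [/\ U^T *m U = 1%:M, V^T *m V = 1%:M, (forall i, 0 <= s ord0 i)
    & G = U *m diag_mx s *m V^T].

Definition is_spectral_clip (R : realType) (m n : nat) (tau : R)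
  (G C : 'M[R]_(m, n)) :=
  exists U s V, is_thin_svd G U s V /\
    C = U *m diag_mx (\row_i Num.min (s ord0 i) tau) *m V^T.

(* C_tau(G): a spectral clipping of G (the thin SVD always exists, and the
   result does not depend on the chosen SVD) *)
Definition spec_clip (R : realType) (m n : nat) (tau : R) (G : 'M[R]_(m, n))
  : 'M[R]_(m, n) :=
  match pselect (exists C, is_spectral_clip tau G C) with
  | left H => projT1 (cid H)
  | right _ => 0
  end.

From HB Require Import structures.
From mathcomp Require Import all_boot all_order all_algebra.
From mathcomp Require Import all_classical all_reals all_analysis.
From mathcomp Require Import lra measurable_realfun.
Set Implicit Arguments. Unset Strict Implicit. Unset Printing Implicit Defensive.
Import Order.TTheory GRing.Theory Num.Theory.
Local Open Scope ring_scope.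

(** The bound holds pointwise in [w].  Clipping keeps the singular values and caps them at [tau], hence
    [|C(G)|^2 <= min(|G|^2, d tau^2)], and [|G|^2 <= 2|M|^2 + 2|G - M|^2].
    Interpolating [min(a, b) <= a^(alpha/2) b^(1 - alpha/2)] with [a = 2|G - M|^2]
    and [b = d tau^2] turns the minimum into a multiple of [|G - M|^alpha],
    whose expectation is at most [sigma^alpha]. *)

Section Frobenius.
Variable R : realType.

Lemma frob_ge0 m n (A : 'M[R]_(m, n)) : 0 <= frob A.
Proof. exact: sqrtr_ge0. Qed.

Lemma frob_sq m n (A : 'M[R]_(m, n)) :
  frob A ^+ 2 = \sum_(i < m) \sum_(j < n) A i j ^+ 2.
Proof.
by rewrite sqr_sqrtr // sumr_ge0 // => i _; rewrite sumr_ge0 // => j _; rewrite sqr_ge0.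
Qed.

Lemma frob_sq_tr m n (A : 'M[R]_(m, n)) : frob A ^+ 2 = \tr (A^T *m A).
Proof.
rewrite frob_sq /mxtrace exchange_big /=; apply: eq_bigr => j _.
by rewrite !mxE; apply: eq_bigr => i _; rewrite mxE expr2.
Qed.

Lemma frob_sqD_le m n (A B : 'M[R]_(m, n)) :
  frob (A + B) ^+ 2 <= 2 * frob A ^+ 2 + 2 * frob B ^+ 2.
Proof.
rewrite !frob_sq !mulr_sumr -big_split /=; apply: ler_sum => i _.
rewrite !mulr_sumr -big_split /=; apply: ler_sum => j _.
have := sqr_ge0 (A i j - B i j); rewrite sqrrB mxE sqrrD; lra.
Qed.

Lemma frob_sq_svd m n k (U : 'M[R]_(m, k)) (V : 'M[R]_(n, k)) (t : 'rV[R]_k) :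
  U^T *m U = 1%:M -> V^T *m V = 1%:M ->
  frob (U *m diag_mx t *m V^T) ^+ 2 = \sum_(i < k) t 0 i ^+ 2.
Proof.
move=> UU VV; rewrite frob_sq_tr !trmx_mul trmxK tr_diag_mx.
rewrite -!mulmxA (mulmxA U^T) UU mul1mx mxtrace_mulC -!mulmxA VV mulmx1.
by rewrite mul_diag_mx /mxtrace; apply: eq_bigr => i _; rewrite !mxE eqxx mulr1n expr2.
Qed.

Lemma sum_sq_min_le k (s : 'rV[R]_k) (tau : R) :
  (forall i, 0 <= s 0 i) -> 0 <= tau ->
  \sum_(i < k) Num.min (s 0 i) tau ^+ 2
    <= Num.min (\sum_(i < k) s 0 i ^+ 2) (k%:R * tau ^+ 2).
Proof.
move=> s0 tau0; have min0 i : 0 <= Num.min (s 0 i) tau by rewrite le_min s0.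
rewrite le_min; apply/andP; split.
  by apply: ler_sum => i _; rewrite ler_sqr ?nnegrE ?s0 // ge_min lexx.
have -> : k%:R * tau ^+ 2 = \sum_(i < k) tau ^+ 2.
  by rewrite sumr_const card_ord mulr_natl.
apply: ler_sum => i _.
by rewrite ler_sqr ?nnegrE // ge_min lexx orbT.
Qed.

Lemma frob_spec_clip_sq_le m n (tau : R) (G : 'M[R]_(m, n)) : 0 <= tau ->
  frob (spec_clip tau G) ^+ 2 <= Num.min (frob G ^+ 2) ((minn m n)%:R * tau ^+ 2).
Proof.
move=> tau0; rewrite /spec_clip; case: pselect => [clipG|_]; last first.
  rewrite frob_sq big1 => [|i _]; last by rewrite big1 // => j _; rewrite mxE expr0n.
  by rewrite le_min sqr_ge0 mulr_ge0 ?sqr_ge0.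
case: (cid clipG) => C /= [U [s [V [[UU VV s0 ->] ->]]]].
rewrite !frob_sq_svd //.
under eq_bigr do rewrite mxE.
exact: sum_sq_min_le.
Qed.

End Frobenius.

Lemma min_le_powR_mean (R : realType) (a b theta : R) :
  0 <= a -> 0 <= b -> 0 <= theta <= 1 ->
  Num.min a b <= a `^ theta * b `^ (1 - theta).
Proof.
move=> a0 b0 /andP[th0 th1].
have th1' : 0 <= 1 - theta by rewrite subr_ge0.
have powR_split x : 0 <= x -> x = x `^ theta * x `^ (1 - theta).
  by move=> x0; rewrite -powRD addrC subrK ?powRr1 ?oner_eq0.
case: (leP a b) => [ab|ba].
- by rewrite {1}(powR_split a a0) ler_wpM2l ?powR_ge0 // ge0_ler_powR.
- by rewrite {1}(powR_split b b0) ler_wpM2r ?powR_ge0 // ge0_ler_powR // ?nnegrE ltW.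
Qed.

(* The constant [2^(4 - alpha)] is generous: interpolation only produces
   [2^(alpha/2)]. *)
Lemma min_sq_le_powR (R : realType) (x d tau alpha : R) :
  0 <= x -> 0 <= d -> 0 <= tau -> 0 <= alpha <= 2 ->
  Num.min (2 * x ^+ 2) (d * tau ^+ 2)
    <= 2 `^ (4 - alpha) * d `^ (1 - alpha / 2) * tau `^ (2 - alpha) * x `^ alpha.
Proof.
move=> x0 d0 tau0 /andP[a0 a2].
have theta01 : 0 <= alpha / 2 <= 1 by apply/andP; split; lra.
have two_x0 : 0 <= 2 * x ^+ 2 by rewrite mulr_ge0 ?sqr_ge0.
have d_tau0 : 0 <= d * tau ^+ 2 by rewrite mulr_ge0 ?sqr_ge0.
apply: le_trans (min_le_powR_mean two_x0 d_tau0 theta01) _.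
rewrite powRM ?sqr_ge0 // powRM ?sqr_ge0 // -(powR_mulrn _ x0) -(powR_mulrn _ tau0) -!powRrM.
have -> : 2 * (alpha / 2) = alpha by lra.
have -> : 2 * (1 - alpha / 2) = 2 - alpha by lra.
rewrite [leRHS]mulrC !mulrA (mulrC (x `^ alpha)).
do 3 (apply: ler_wpM2r; first exact: powR_ge0).
by apply: ler_powR; [rewrite ler1n | lra].
Qed.

Lemma frob_spec_clip_sq_le_dev (R : realType) m n (G M : 'M[R]_(m, n))
    (alpha tau : R) :
  0 <= alpha <= 2 -> 0 <= tau ->
  frob (spec_clip tau G) ^+ 2 <= 2 * frob M ^+ 2 +
    2 `^ (4 - alpha) * (minn m n)%:R `^ (1 - alpha / 2) * tau `^ (2 - alpha)
    * frob (G - M) `^ alpha.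
Proof.
move=> alpha02 tau0; set d := (minn m n)%:R; set x := frob (G - M).
have dev : frob G ^+ 2 <= 2 * frob M ^+ 2 + 2 * x ^+ 2.
  by rewrite -[G in frob G](subrK M) addrC frob_sqD_le.
have min_dev : Num.min (frob G ^+ 2) (d * tau ^+ 2)
    <= 2 * frob M ^+ 2 + Num.min (2 * x ^+ 2) (d * tau ^+ 2).
  case: (leP (2 * x ^+ 2) (d * tau ^+ 2)) => h.
  - by rewrite ge_min dev.
  - by rewrite ge_min lerDr mulr_ge0 ?sqr_ge0 ?orbT.
apply: le_trans (frob_spec_clip_sq_le G tau0) (le_trans min_dev _).
by rewrite lerD2l min_sq_le_powR ?frob_ge0.
Qed.

Lemma measurable_frob d (T : measurableType d) (R : realType) m n
    (F : T -> 'M[R]_(m, n)) :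
  (forall i j, measurable_fun setT (fun w => F w i j)) ->
  measurable_fun setT (fun w => frob (F w)).
Proof.
move=> mF; apply: measurableT_comp (continuous_measurable_fun (@sqrt_continuous R)) _.
by apply: measurable_sum => i; apply: measurable_sum => j; exact: measurable_funX.
Qed.

Local Open Scope ereal_scope.

(* No measurability is required: for nonnegative functions the integral is the
   supremum of the integrals of the simple functions below it.  This matters
   because [spec_clip] is defined by choice and need not be measurable. *)
Lemma ge0_le_integralT d (T : measurableType d) (R : realType)
    (mu : {measure set T -> \bar R}) (f g : T -> \bar R) :
  (forall x, 0 <= f x) -> (forall x, f x <= g x) ->
  \int[mu]_x f x <= \int[mu]_x g x.
Proof.
move=> f0 fg; rewrite !ge0_integralTE // => [|x]; last exact: le_trans (fg x).
apply: ge_ereal_sup => _ [h hf <-]; apply: ereal_sup_ubound; exists h => //.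
by move=> x; exact: le_trans (hf x) (fg x).
Qed.

Local Close Scope ereal_scope.

Theorem mainTheorem4 (R : realType) (dsp : measure_display)
  (Omega : measurableType dsp) (P : probability Omega R)
  (m n : nat) (G : Omega -> 'M[R]_(m, n)) (M : 'M[R]_(m, n))
  (alpha sigma tau : R) :
  (forall i j, measurable_fun setT (fun w => G w i j)) ->
  (forall i j, P.-integrable setT (fun w => (G w i j)%:E)) ->
  (forall i j, (\int[P]_w (G w i j)%:E = (M i j)%:E)%E) ->
  1 < alpha -> alpha <= 2 -> 0 < sigma ->
  (\int[P]_w ((frob (G w - M)) `^ alpha)%:E <= (sigma `^ alpha)%:E)%E ->
  0 < tau ->
  (\int[P]_w ((frob (spec_clip tau (G w))) ^+ 2)%:E
    <= (2 * frob M ^+ 2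
        + 2 `^ (4 - alpha) * (minn m n)%:R `^ (1 - alpha / 2)
          * tau `^ (2 - alpha) * sigma `^ alpha)%:E)%E.
Proof.
move=> mG _ _ alpha1 alpha2 _ moment tau0.
set K := 2 `^ (4 - alpha) * _ * _.
have alpha02 : 0 <= alpha <= 2 by apply/andP; split; lra.
have K0 : 0 <= K by rewrite !mulr_ge0 ?powR_ge0.
have mdev : measurable_fun setT (fun w => frob (G w - M) `^ alpha).
  apply: measurableT_comp (measurable_powR alpha) (measurable_frob _) => i j.
  by under eq_fun do rewrite !mxE; exact: measurable_funB.
apply: (@le_trans _ _
  (\int[P]_w ((2 * frob M ^+ 2)%:E + K%:E * (frob (G w - M) `^ alpha)%:E))%E).
  apply: ge0_le_integralT => w; first by rewrite lee_fin sqr_ge0.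
  by rewrite -EFinM -EFinD lee_fin frob_spec_clip_sq_le_dev ?(ltW tau0).
rewrite ge0_integralD //; last 3 first.
- by move=> w _; rewrite lee_fin mulr_ge0 ?sqr_ge0.
- by move=> w _; rewrite mule_ge0 // lee_fin powR_ge0.
- exact/measurable_funeM/measurable_EFinP.
rewrite integral_cst //= probability_setT mule1 ge0_integralZl //; last 2 first.
- exact/measurable_EFinP.
- by move=> w _; rewrite lee_fin powR_ge0.
by rewrite EFinD leeD2l // (EFinM K) lee_wpmul2l ?lee_fin.
Qed.
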